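(* Let $m\ge 3$, $H=B(l_1,\ldots,l_m)$ and $G=H^2$. Then $G$ is equitably $(m+1)$-choosable.
   Context: All graphs are finite and simple. For $m,l_1,\ldots,l_m\in\mathbb{N}$ with $l_1\le\cdots\le l_m$, $B(l_1,\ldots,l_m)$ is the graph with vertex set $\{u\}\cup\{v_{i,j}: i\in[m], j\in[l_i]\}$ in which, for each $i\in[m]$, consecutive vertices in the sequence $u, v_{i,1},\ldots,v_{i,l_i}$ are adjacent (and there are no other edges). For a graph $H$, $H^2$ has vertex set $V(H)$ with two vertices adjacent iff their distance in $H$ is 1 or 2. A $k$-assignment $L$ assigns to each vertex a set of exactly $k$ colors; an equitable $L$-coloring of $G$ is a proper coloring $f$ with $f(v)\in L(v)$ such that no color is used more than $\lceil |V(G)|/k\rceil$ times; $G$ is equitably $k$-choosable if it has an equitable $L$-coloring for every $k$-assignment $L$. *)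

From mathcomp Require Import all_boot.
Set Implicit Arguments. Unset Strict Implicit. Unset Printing Implicit Defensive.

(* A simple graph is a finite type V with a symmetric irreflexive rel. *)

Definition graph_sq (V : finType) (e : rel V) : rel V :=
  fun x y => (x != y) && (e x y || [exists z, e x z && e z y]).

Definition ceil_div (n k : nat) : nat := (n + k.-1) %/ k.

Definition equitable_L_coloring (V : finType) (e : rel V) (k : nat)
    (C : finType) (L : V -> {set C}) (f : V -> C) : Prop :=
  [/\ forall x y, e x y -> f x != f y,
      forall v, f v \in L v &
      forall c, #|[set v | f v == c]| <= ceil_div #|V| k].

Definition equitably_choosable (V : finType) (e : rel V) (k : nat) : Prop :=
  forall (C : finType) (L : V -> {set C}),
    (forall v, #|L v| = k) ->
    exists f : V -> C, equitable_L_coloring e k L f.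

(* The spider B(l_1,...,l_m): vertex None is u; Some (existT i j) is
   v_{i+1, j+1} (0-based indices i : 'I_m, j : 'I_(l i)). *)
Definition Bvert (m : nat) (l : 'I_m -> nat) : finType :=
  option {i : 'I_m & 'I_(l i)}.

Definition Bedge (m : nat) (l : 'I_m -> nat) : rel (Bvert l) :=
  fun x y =>
    match x, y with
    | None, None => false
    | None, Some q => val (tagged q) == 0
    | Some p, None => val (tagged p) == 0
    | Some p, Some q =>
        (tag p == tag q) &&
        (((val (tagged p)).+1 == val (tagged q)) ||
         ((val (tagged q)).+1 == val (tagged p)))
    end.

From mathcomp Require Import all_boot zify.
Set Implicit Arguments. Unset Strict Implicit. Unset Printing Implicit Defensive.

(* The proof is a greedy list coloring along a well-chosen order.
   1. BlockGreedy: if the vertices are cut into q <= ceil(|V|/k) blocks and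
      carry weights wt such that every vertex has at most wt x neighbours in
      earlier blocks and, in its own block, the vertices of weight >= wt x
      number at most k - wt x, then coloring greedily block by block (by
      decreasing weight inside a block) gives an equitable L-coloring for
      every k-assignment L: no color is repeated inside a block.
   2. Layout: we place the vertices of G at positions 0, ..., |V| - 1 --
      leg a reversed, the centre, leg b, then the remaining legs -- cut the
      positions into chunks of k = m + 1 and define weights.  Every condition
      of step 1 holds in general, except for vertices of weight 1 and 2.
   3. These two conditions are checked for m = 3 (with a suitable pair of
      legs a, b chosen by a parity argument) and for m >= 4 (with legs
      sorted by length, a = 0 and b = 1). *)

Section BlockGreedy.
Variables (V : finType) (e : rel V) (k q : nat) (blk wt : V -> nat).
Hypothesis e_irr : forall x, ~~ e x x.
Hypothesis blk_lt : forall x, blk x < q.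
Hypothesis q_le : q <= ceil_div #|V| k.
Hypothesis back_deg :
  forall x, #|[set y | (e x y || e y x) && (blk y < blk x)]| <= wt x.
Hypothesis block_room :
  forall x, #|[set y | (blk y == blk x) && (wt x <= wt y)]| + wt x <= k.

(* The block of x is counted in block_room, so there is always a spare color. *)
Lemma wt_lt_k x : wt x < k.
Proof.
have Hx : x \in [set y | (blk y == blk x) && (wt x <= wt y)].
  by rewrite inE eqxx leqnn.
have : 0 < #|[set y | (blk y == blk x) && (wt x <= wt y)]|.
  by apply/card_gt0P; exists x.
have := block_room x; lia.
Qed.

Lemma lex_leq (N a r a' r' : nat) : r < N -> r' < N ->
  a' * N + r' <= a * N + r -> a' < a \/ (a' = a /\ r' <= r).
Proof.
move=> Hr Hr' Hle; have N0 : 0 < N by apply: leq_ltn_trans Hr.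
have Ha : a' <= a.
  by have := leq_div2r N Hle; rewrite !divnMDl // !divn_small // !addn0.
case: (ltngtP a' a) => [|Hlt|Ha']; [by left | by move: Ha; rewrite leqNgt Hlt |].
by right; split => //; move: Hle; rewrite Ha' leq_add2l.
Qed.

(* Greedy order: by block, then by decreasing weight, ties broken by
   enum_rank; rank is an injective encoding of this lexicographic order. *)
Definition rank (x : V) : nat :=
  (blk x * k.+1 + (k - wt x)) * #|V| + enum_rank x.

Lemma rank_inj : injective rank.
Proof.
move=> x y Hxy; apply/enum_rank_inj/val_inj.
have: rank x %% #|V| = rank y %% #|V| by rewrite Hxy.
by rewrite !modnMDl !modn_small.
Qed.

Lemma rank_lt x y : rank y < rank x ->
  blk y < blk x \/ (blk y = blk x /\ wt x <= wt y).
Proof.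
move/ltnW/lex_leq => /(_ (ltn_ord _) (ltn_ord _)) Hr.
have {Hr} : (blk y * k.+1 + (k - wt y)) <= blk x * k.+1 + (k - wt x).
  by case: Hr => [/ltnW | [->]].
move/lex_leq; rewrite !ltnS !leq_subr => /(_ isT isT) [|[Hb Hw]]; first by left.
by right; split; last by have := wt_lt_k x; have := wt_lt_k y; lia.
Qed.

Definition conflict (x y : V) : bool := [|| e x y, e y x | blk x == blk y].

Lemma conflict_sym x y : conflict x y = conflict y x.
Proof. by rewrite /conflict orbCA eq_sym. Qed.

(* Fewer than k vertices before x conflict with x: lower-block neighbours
   are bounded by wt x, same-block predecessors by block_room. *)
Lemma few_earlier_conflicts x :
  #|[set y | (rank y < rank x) && conflict x y]| < k.
Proof.
set F := [set y | _ && _].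
set Lo := [set y | (e x y || e y x) && (blk y < blk x)].
set Hi := [set y | (blk y == blk x) && (wt x <= wt y)].
have sF : F \subset Lo :|: (Hi :\ x).
  apply/subsetP => y; rewrite !inE /conflict => /andP [Hr Hc].
  case: (rank_lt Hr) => [Hlt | [Heq Hle]].
    rewrite Hlt andbT; move: Hc; rewrite eq_sym (ltn_eqF Hlt) !orbF.
    by case/orP => ->; rewrite ?orbT.
  rewrite Heq eqxx Hle ltnn !andbT andbF /=.
  by apply: contraTneq Hr => ->; rewrite ltnn.
have Hx : x \in Hi by rewrite inE eqxx leqnn.
have := subset_leq_card sF; have := cardsU Lo (Hi :\ x).
have := cardsD1 x Hi; rewrite Hx.
have := back_deg x; have := block_room x; rewrite -/Lo -/Hi; lia.
Qed.

(* Greedy list coloring along rank: each vertex gets a color of its list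
   not used by the (fewer than k) earlier conflicting vertices. *)
Lemma greedy_coloring (C : finType) (L : V -> {set C}) :
  (forall v, #|L v| = k) ->
  exists f : V -> C, (forall x, f x \in L x) /\
    (forall x y, x != y -> conflict x y -> f x != f y).
Proof.
move=> HL.
have pickL v : {c | c \in L v}.
  case: (pickP [in L v]) => [c Hc | H0]; first by exists c.
  by exfalso; move: (eq_card0 H0); rewrite HL; have := wt_lt_k v; lia.
pose good (f : V -> C) n := forall x, rank x < n -> f x \in L x /\
  forall y, rank y < rank x -> conflict x y -> f x != f y.
have good_all n : exists f, good f n.
  elim: n => [|n [f Hf]]; first by exists (fun v => sval (pickL v)).
  case: (pickP (fun x => rank x == n)) => [x /eqP Hx | Hnone]; last first.
    exists f => v Hv; apply: Hf; have := Hnone v; rewrite /= => /negbT/eqP; lia.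
  pose used := [set f y | y in [set y | (rank y < rank x) && conflict x y]].
  have : ~~ (L x \subset used).
    apply/negP => /subset_leq_card; rewrite HL leqNgt; apply/negP/negPn.
    exact: leq_ltn_trans (leq_imset_card _ _) (few_earlier_conflicts x).
  case/subsetPn => c HcL Hcu.
  exists (fun v => if v == x then c else f v) => v Hv.
  case: (eqVneq v x) => [-> | Hvx].
    split => // y Hy Hc; rewrite ifN; last by apply: contraTneq Hy => ->; rewrite ltnn.
    by apply: contraNneq Hcu => ->; apply: imset_f; rewrite inE Hy Hc.
  have Hvn : rank v < n.
    have : rank v != rank x by apply: contra Hvx => /eqP/rank_inj ->.
    rewrite Hx; lia.
  have [HfL Hfc] := Hf v Hvn; split => // y Hy Hc.
  rewrite ifN; first exact: Hfc.
  by apply: contraTneq Hy => ->; rewrite -leqNgt Hx ltnW.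
have [f Hf] := good_all (\max_x rank x).+1.
have {}Hf x := Hf x (@leq_bigmax _ rank x).
exists f; split => [x | x y Hxy Hc]; first exact: (Hf x).1.
have : rank x != rank y by apply: contra Hxy => /eqP/rank_inj ->.
case: (ltngtP (rank x) (rank y)) => // Hr _.
- by rewrite eq_sym; apply: (Hf y).2; rewrite // conflict_sym.
- exact: (Hf x).2.
Qed.

(* A greedy coloring meets each block at most once per color, hence every
   color class has at most q <= ceil(|V|/k) vertices. *)
Lemma block_greedy_equitable : equitably_choosable e k.
Proof.
move=> C L HL; have [f [HfL Hfc]] := greedy_coloring HL.
exists f; split => // [x y Hxy | c].
  apply: Hfc; last by rewrite /conflict Hxy.
  by apply: contraNneq (e_irr x) => Exy; rewrite {2}Exy.
apply: (leq_trans _ q_le); rewrite -[q]card_ord.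
apply: (leq_card_in (fun v => Ordinal (blk_lt v))) => x y.
rewrite !inE => /eqP Hx /eqP Hy /(congr1 val) /= Hb.
apply/eqP/negPn/negP => Hxy.
by have := Hfc x y Hxy; rewrite /conflict Hb eqxx !orbT Hx Hy eqxx => /(_ isT).
Qed.

End BlockGreedy.

Section SpiderSquare.
Variables (m : nat) (l : 'I_m -> nat).
Local Notation V := (Bvert l).
Local Notation E := (graph_sq (@Bedge m l)).

Definition sq_near (x y : V) : Prop :=
  match x, y with
  | None, None => False
  | None, Some q => val (tagged q) <= 1
  | Some p, None => val (tagged p) <= 1
  | Some p, Some q =>
      (tag p = tag q /\ val (tagged p) <= val (tagged q) + 2 /\
       val (tagged q) <= val (tagged p) + 2)
      \/ (val (tagged p) = 0 /\ val (tagged q) = 0)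
  end.

Lemma sq_edge_near (x y : V) : E x y -> sq_near x y.
Proof.
rewrite /graph_sq => /andP [Hne /orP [H | /existsP [z /andP [H1 H2]]]].
- case: x y Hne H => [p|] [q|] //= Hne.
  + case/andP => /eqP Ht /orP [/eqP|/eqP] Hd; left; split => //; lia.
  + by move/eqP => ->.
  + by move/eqP => ->.
- case: x y z Hne H1 H2 => [p|] [q|] [r|] //= Hne.
  + case/andP => /eqP Ht1 /orP [/eqP|/eqP] Hd1;
    case/andP => /eqP Ht2 /orP [/eqP|/eqP] Hd2; left; split; try congruence; lia.
  + by move=> /eqP H1 /eqP H2; right.
  + case/andP => /eqP Ht1 /orP [/eqP|/eqP] Hd1 /eqP Hd2; lia.
  + move=> /eqP Hd1; case/andP => /eqP Ht2 /orP [/eqP|/eqP] Hd2; lia.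
Qed.

Lemma Bedge_sym (x y : V) : Bedge x y = Bedge y x.
Proof. by case: x y => [p|] [q|] //=; rewrite eq_sym orbC. Qed.

Lemma sq_sym (x y : V) : E x y = E y x.
Proof.
rewrite /graph_sq eq_sym Bedge_sym; congr (_ && (_ || _)).
by apply: eq_existsb => z; rewrite andbC !(Bedge_sym z).
Qed.

Lemma sq_irr (x : V) : ~~ E x x.
Proof. by rewrite /graph_sq eqxx. Qed.

Lemma card_spider : #|V| = (\sum_(i < m) l i).+1.
Proof.
rewrite /Bvert card_option card_tagged sumnE big_map big_enum /=.
by congr _.+1; apply: eq_bigr => i _; exact: card_ord.
Qed.

Lemma leg_vertex_eq (p q : {i : 'I_m & 'I_(l i)}) :
  tag p = tag q -> val (tagged p) = val (tagged q) -> p = q.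
Proof. by case: p q => i j [i' j'] /= Hi; subst i' => /val_inj ->. Qed.

(* The hubs are the centre and the first vertex of every leg: they form a
   clique of the square, and there are m + 1 of them. *)
Definition hub (x : V) : bool :=
  if x is Some p then val (tagged p) == 0 else true.

Lemma card_hubs : #|[set y : V | hub y]| <= m.+1.
Proof.
have -> : m.+1 = #|{: option 'I_m}| by rewrite card_option card_ord.
apply: (leq_card_in (omap (fun p => tag p))) => [[p|] [q|]] //.
rewrite !inE /= => /eqP Hp /eqP Hq [Ht].
by congr Some; apply: leg_vertex_eq => //=; rewrite Hp Hq.
Qed.

End SpiderSquare.

Section PrefixSums.
Variables (m : nat) (l : 'I_m -> nat).

Definition pre (t : nat) : nat := \sum_(j < m | j < t) l j.

Lemma pre0 : pre 0 = 0.
Proof. by rewrite /pre big_pred0. Qed.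

Lemma pre_S (i : 'I_m) : pre i.+1 = pre i + l i.
Proof.
rewrite /pre (bigD1 i) //= addnC; congr (_ + _).
by apply: eq_bigl => j; rewrite ltnS andbC -ltn_neqAle.
Qed.

Lemma pre_mono t t' : t <= t' -> pre t <= pre t'.
Proof. by move=> Htt'; apply: sub_le_big => // [? ? | j /leq_trans]; [exact: leq_addr | apply]. Qed.

Lemma pre_all : pre m = \sum_(j < m) l j.
Proof. by apply: eq_bigl => j; rewrite ltn_ord. Qed.

Lemma pre_le_bound (i : 'I_m) c :
  (forall j : 'I_m, j < i -> l j <= c) -> pre i <= c * m.-1.
Proof.
move=> Hc; apply: (@leq_trans (\sum_(j < m | j < i) c)); first exact: leq_sum.
rewrite sum_nat_const mulnC leq_mul2l; apply/orP; right.
have -> : m.-1 = #|[set~ i]| by rewrite cardsC1 card_ord.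
apply: subset_leq_card; apply/subsetP => j; rewrite !inE unfold_in /= => Hj.
by apply: contraTneq Hj => ->; rewrite subSnn.
Qed.

End PrefixSums.

Section Layout.
Variables (m : nat) (l : 'I_m -> nat) (a b : 'I_m) (P : 'I_m -> nat).
Local Notation V := (Bvert l).
Local Notation E := (graph_sq (@Bedge m l)).
Local Notation k := m.+1.
Hypothesis a_neq_b : a != b.
Hypothesis l_gt0 : forall i, 0 < l i.

(* The legs other than a and b are laid out at positions P i, ..., P i + l i - 1,
   after leg a (reversed), the centre and leg b, in increasing order of i,
   without overlap, inside [0, |V|). *)
Definition other (i : 'I_m) : bool := (i != a) && (i != b).
Hypothesis P_gt : forall i, other i -> l a + l b < P i.
Hypothesis P_sep :
  forall i i', other i -> other i' -> i < i' -> P i + l i <= P i'.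
Hypothesis P_le : forall i, other i -> P i + l i <= #|V|.

Definition on_other (x : V) : bool := if x is Some p then other (tag p) else false.

Definition pos (x : V) : nat :=
  match x with
  | None => l a
  | Some p => if tag p == a then l a - (val (tagged p)).+1
              else if tag p == b then l a + (val (tagged p)).+1
              else P (tag p) + val (tagged p)
  end.

Lemma pos_other (p : {i : 'I_m & 'I_(l i)}) :
  other (tag p) -> pos (Some p) = P (tag p) + val (tagged p).
Proof. by case/andP => /negbTE Ha /negbTE Hb; rewrite /pos Ha Hb. Qed.

Lemma pos_on_other x : on_other x -> l a + l b < pos x.
Proof.
case: x => [p Hi|//]; rewrite (pos_other Hi).
by apply: leq_trans (P_gt Hi) (leq_addr _ _).
Qed.

Lemma pos_not_other x : ~~ on_other x -> pos x <= l a + l b.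
Proof.
case: x => [[i j]|_]; last exact: leq_addr.
rewrite /= /other negb_and !negbK /pos /=; have Hj := ltn_ord j.
by case/orP => /eqP Hi; subst i; rewrite ?eqxx ?[b == a]eq_sym ?(negbTE a_neq_b); lia.
Qed.

Lemma pos_inj : injective pos.
Proof.
move=> x y; case Hx: (on_other x); case Hy: (on_other y).
- case: x y Hx Hy => [p|] [q|] // Hp Hq; rewrite (pos_other Hp) (pos_other Hq) => Hpq.
  case: p q Hp Hq Hpq => [i j] [i' j'] /= Hi Hi' Hpq.
  have Hj := ltn_ord j; have Hj' := ltn_ord j'.
  case: (ltngtP i i') => [Hlt | Hlt | /val_inj Hii'].
  + by have := P_sep Hi Hi' Hlt; lia.
  + by have := P_sep Hi' Hi Hlt; lia.
  + by subst i'; congr Some; apply: leg_vertex_eq => //=; lia.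
- by have := pos_on_other Hx; have := pos_not_other (negbT Hy); lia.
- by have := pos_on_other Hy; have := pos_not_other (negbT Hx); lia.
- have la := l_gt0 a; move: Hx Hy => /negbT Hx /negbT Hy.
  case: x y Hx Hy => [[i j]|] [[i' j']|] //=; rewrite /other ?negb_and ?negbK /pos /=.
  + move=> /orP [] /eqP Hi /orP [] /eqP Hi'; subst;
      rewrite ?eqxx ?[b == a]eq_sym ?(negbTE a_neq_b) => Hpq;
      have := ltn_ord j; have := ltn_ord j';
      first [by move=> *; congr Some; apply: leg_vertex_eq => //=; lia | lia].
  + move=> /orP [] /eqP Hi _; subst; rewrite ?eqxx ?[b == a]eq_sym ?(negbTE a_neq_b);
      have := ltn_ord j; lia.
  + move=> _ /orP [] /eqP Hi'; subst; rewrite ?eqxx ?[b == a]eq_sym ?(negbTE a_neq_b);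
      have := ltn_ord j'; lia.
Qed.


Lemma sum_ab : l a + l b <= \sum_(i < m) l i.
Proof.
by rewrite (bigD1 a) //= (bigD1 b) 1?eq_sym //= addnA leq_addr.
Qed.

Lemma pos_lt x : pos x < #|V|.
Proof.
case Hx: (on_other x); last first.
  by rewrite card_spider ltnS; exact: leq_trans (pos_not_other (negbT Hx)) sum_ab.
case: x Hx => [[i j] Hi|//]; rewrite [pos _]/=.
by case/andP: (Hi) => /negbTE -> /negbTE ->; have := @P_le i Hi; have := ltn_ord j; lia.
Qed.

Lemma card_pos (Q : pred V) (s : seq nat) :
  (forall y, Q y -> pos y \in s) -> #|[set y | Q y]| <= size s.
Proof.
move=> HQ; rewrite cardE -(size_map pos).
apply: uniq_leq_size; first by rewrite (map_inj_uniq pos_inj) enum_uniq.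
by move=> t /mapP [y]; rewrite mem_enum inE => /HQ Hy ->.
Qed.

Definition chunk (x : V) : nat := pos x %/ k.
Definition start (x : V) : nat := chunk x * k.

Lemma start_le x : start x <= pos x.
Proof. exact: leq_divM. Qed.

Lemma chunk_bounds x y : chunk y == chunk x -> start x <= pos y < start x + k.
Proof.
move/eqP => H; rewrite /start -H; apply/andP; split; first exact: leq_divM.
by rewrite addnC -mulSn -ltn_divLR.
Qed.

Lemma chunk_of_bounds x p : start x <= p < start x + k -> p %/ k = chunk x.
Proof.
rewrite /start => /andP [H1 H2].
rewrite -(subnKC H1) divnMDl // divn_small ?addn0 //; lia.
Qed.

Lemma start_eq x y : chunk y == chunk x -> start y = start x.
Proof. by rewrite /start => /eqP ->. Qed.

Lemma start_ge x : 0 < start x -> k <= start x.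
Proof. by rewrite /start; case: (chunk x) => // c _; rewrite mulSn leq_addr. Qed.

Lemma card_chunk x : #|[set y | chunk y == chunk x]| <= k.
Proof.
apply: leq_trans (card_pos (s := iota (start x) k) _) _; last by rewrite size_iota.
by move=> y Hy; rewrite mem_iota; exact: chunk_bounds.
Qed.

Section FullChunk.
Variables (x : V) (Q : pred V).
Hypothesis many : m < #|[set y | (chunk y == chunk x) && Q y]|.

Lemma full_chunk_all y : chunk y == chunk x -> Q y.
Proof.
move=> Hy; apply: contraLR many => HQ; rewrite -leqNgt -ltnS.
apply: leq_trans (card_chunk x); apply: proper_card; apply/properP; split.
  by apply/subsetP => z; rewrite !inE => /andP [].
by exists y; rewrite !inE ?Hy // (negbTE HQ) andbF.
Qed.

Lemma full_chunk_last : exists2 z, Q z & chunk z == chunk x /\ start x + m <= pos z.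
Proof.
suff /existsP [z /and3P [? ? ?]] :
    [exists z, [&& Q z, chunk z == chunk x & start x + m <= pos z]] by exists z.
apply: contraLR many; rewrite negb_exists -leqNgt => /forallP Hn.
apply: leq_trans (card_pos (s := iota (start x) m) _) _; last by rewrite size_iota.
move=> y /andP [Hy HQ]; have := Hn y; rewrite HQ Hy /= -ltnNge => Hlt.
by rewrite mem_iota Hlt andbT; have /andP [] := chunk_bounds Hy.
Qed.

End FullChunk.

Definition first_other (x : V) : bool :=
  if x is Some p then other (tag p) && (val (tagged p) == 0) else false.
Definition second_other (x : V) : bool :=
  if x is Some p then other (tag p) && (val (tagged p) == 1) else false.

Lemma earlier_nbr_first x y : first_other x -> E x y -> pos y < pos x -> hub y.
Proof.
case: x => [[i j]|] //= /andP [/andP [Ha Hb] /eqP Hj0].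
case: y => [[i' j']|] //= /sq_edge_near /= [[Hi _]|[_ ->]] //.
move: Hi => /= Hi; subst i'.
by rewrite /pos /= (negbTE Ha) (negbTE Hb) Hj0; lia.
Qed.

Lemma earlier_nbr_second x y : second_other x -> E x y -> pos y < pos x ->
  pos y = l a \/ pos y = (pos x).-1.
Proof.
case: x => [[i j]|] //= /andP [/andP [Ha Hb] /eqP Hj1].
case: y => [[i' j']|] /sq_edge_near //=; last by left.
case=> [[Hi _]|[Hj0 _]]; last lia.
move: Hi => /= Hi; subst i'.
by rewrite /pos /= (negbTE Ha) (negbTE Hb) Hj1; lia.
Qed.

Lemma earlier_nbr_path x y : ~~ first_other x -> ~~ second_other x -> E x y ->
  pos y < pos x -> pos y = (pos x).-1 \/ pos y = (pos x).-2.
Proof.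
have la := l_gt0 a; have lb := l_gt0 b.
have P_gt' i : (i == a) = false -> (i == b) = false -> l a + l b < P i.
  by move=> Ha Hb; apply: P_gt; rewrite /other Ha Hb.
case: x => [[i j]|] /=; last first.
  move=> _ _ /sq_edge_near; case: y => [[i' j']|] //= Hj1.
  rewrite /pos /=; have := ltn_ord j'.
  case Ha': (i' == a); first by have := congr1 l (eqP Ha'); lia.
  by case Hb': (i' == b); last have := P_gt' _ Ha' Hb'; lia.
rewrite /other /pos /= => HS HT /sq_edge_near; have Hj := ltn_ord j.
case: y => [[i' j']|] /=; last first.
  move=> Hj1; case Ha: (i == a); first lia.
  by case Hb: (i == b); [lia | move: HS HT; rewrite Ha Hb /=; lia].
have Hj' := ltn_ord j'.
case=> [[/= Hi [H1 H2]]|[Hj0 Hj0']].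
  subst i'; case Ha: (i == a); first by have := congr1 l (eqP Ha); lia.
  by case Hb: (i == b); [lia | move: HS HT; rewrite Ha Hb /=; lia].
move: HS; rewrite Hj0 eqxx andbT.
case Ha: (i == a); case Ha': (i' == a) => /=.
- by have := congr1 l (eqP Ha); have := congr1 l (eqP Ha'); lia.
- by case Hb': (i' == b); last have := P_gt' _ Ha' Hb'; lia.
- by case Hb: (i == b) => //=; lia.
- case Hb: (i == b) => //= _.
  by case Hb': (i' == b); last have := P_gt' _ Ha' Hb'; lia.
Qed.

(* The weight of x bounds the number of its neighbours in earlier chunks
   (lemma back_nbrs), and is as small as the shape of x allows. *)
Definition weight (x : V) : nat :=
  if first_other x then #|[set y | hub y && (pos y < start x)]|
  else if second_other x then (l a < start x) + (pos x == start x)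
  else (0 < start x) * ((pos x == start x) + (pos x <= (start x).+1)).

Lemma pos_first_second x : first_other x || second_other x ->
  exists i (j : 'I_(l i)),
    [/\ x = Some (existT _ i j), other i, val j <= 1 & pos x = P i + j].
Proof.
case: x => [[i j]|] //= /orP [] /andP [Hi /eqP Hj]; exists i, j;
  by split => //; [lia | case/andP: Hi => /negbTE Ha /negbTE Hb; rewrite /pos /= Ha Hb].
Qed.

Lemma pos_first_second_gt0 x : first_other x || second_other x -> 0 < pos x.
Proof. by case/pos_first_second => i [j [_ /P_gt Hi _ ->]]; lia. Qed.

Lemma back_nbrs x :
  #|[set y | (E x y || E y x) && (chunk y < chunk x)]| <= weight x.
Proof.
have Hst := start_le x.
apply: (@leq_trans #|[set y | E x y && (pos y < start x)]|).
  apply: subset_leq_card; apply/subsetP => y.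
  by rewrite !inE (sq_sym y x) orbb /chunk ltn_divLR.
rewrite /weight; case HS: (first_other x).
  apply: subset_leq_card; apply/subsetP => y; rewrite !inE => /andP [Hxy Hy].
  by rewrite Hy andbT; apply: (earlier_nbr_first HS Hxy); lia.
case HT: (second_other x).
  have Hp := pos_first_second_gt0 (introT orP (or_intror HT)).
  apply: leq_trans (card_pos (s := [seq t <- [:: l a; (pos x).-1] | t < start x]) _) _.
    move=> y /andP [Hxy Hy]; rewrite mem_filter Hy /=.
    by case: (earlier_nbr_second HT Hxy (leq_trans Hy Hst)) => ->;
      rewrite !inE eqxx ?orbT.
  rewrite size_filter /=; lia.
apply: leq_trans (card_pos (s := [seq t <- [:: (pos x).-1; (pos x).-2] | t < start x]) _) _.
  move=> y /andP [Hxy Hy]; rewrite mem_filter Hy /=.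
  by case: (earlier_nbr_path (negbT HS) (negbT HT) Hxy (leq_trans Hy Hst)) => ->;
    rewrite !inE eqxx ?orbT.
rewrite size_filter /=; lia.
Qed.

Lemma weight_le2 x : ~~ first_other x -> weight x <= 2.
Proof. by move=> HS; rewrite /weight (negbTE HS); case: (second_other x); lia. Qed.

Lemma weight1_pos x : 1 <= weight x -> ~~ first_other x -> ~~ second_other x ->
  pos x <= (start x).+1.
Proof. by move=> + HS HT; rewrite /weight (negbTE HS) (negbTE HT); lia. Qed.

Lemma weight2_pos x : 2 <= weight x -> ~~ first_other x -> pos x = start x.
Proof.
move=> + HS; have := start_le x.
by rewrite /weight (negbTE HS); case: (second_other x); lia.
Qed.

Lemma weight_start x : 1 <= weight x -> 0 < start x.
Proof.
rewrite /weight; case: (first_other x).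
  by case/card_gt0P => z; rewrite inE => /andP [_]; lia.
case HT: (second_other x); last lia.
have := pos_first_second_gt0 (introT orP (or_intror HT)); have := start_le x; lia.
Qed.

Lemma hubs_split C :
  #|[set y | hub y && (pos y < C)]| + #|[set y | hub y && (C <= pos y)]| <= k.
Proof.
apply: leq_trans (card_hubs l).
rewrite -(cardsID [set y | pos y < C] [set y | hub y]).
by apply: leq_add; apply: subset_leq_card; apply/subsetP => y;
  rewrite !inE -?leqNgt => /andP [-> ->].
Qed.

Definition room (t : nat) : Prop := forall x, weight x = t ->
  #|[set y | (chunk y == chunk x) && (t <= weight y)]| + t <= k.

Lemma room0 : room 0.
Proof.
move=> x _; rewrite addn0; apply: leq_trans (card_chunk x).
by apply: subset_leq_card; apply/subsetP => y; rewrite !inE => /andP [].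
Qed.

(* Weight >= 3 occurs only at first vertices of other legs, where it counts
   hubs before the chunk; the competitors are hubs inside the chunk. *)
Lemma room_ge3 t : 3 <= t -> room t.
Proof.
move=> Ht x Hwx.
have HS : first_other x by apply: contraLR Ht => /weight_le2; rewrite -Hwx; lia.
have Hwx' : weight x = #|[set y | hub y && (pos y < start x)]| by rewrite /weight HS.
apply: leq_trans (hubs_split (start x)); rewrite addnC -{1}Hwx Hwx' leq_add2l.
apply: subset_leq_card; apply/subsetP => y; rewrite !inE => /andP [Hy Hwy].
have /andP [-> _] := chunk_bounds Hy; rewrite andbT.
have HSy : first_other y by apply: contraLR Hwy => /weight_le2; lia.
by move: HSy; case: y {Hy Hwy} => [[i j]|] //= /andP [_ ->].
Qed.

Lemma block_room (room1 : room 1) (room2 : room 2) x :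
  #|[set y | (chunk y == chunk x) && (weight x <= weight y)]| + weight x <= k.
Proof.
case Hw: (weight x) => [|[|[|t]]]; [exact: room0 | exact: room1 |
  exact: room2 | exact: room_ge3].
Qed.

Lemma layout_equitable : room 1 -> room 2 -> equitably_choosable E k.
Proof.
move=> room1 room2.
apply: (block_greedy_equitable (q := ceil_div #|V| k) (blk := chunk) (wt := weight)).
- exact: sq_irr.
- move=> x; rewrite /chunk ltn_divLR // /ceil_div /=.
  have : #|V| + m < ((#|V| + m) %/ k).+1 * k by rewrite -ltn_divLR.
  by rewrite mulSn; have := pos_lt x; lia.
- exact: leqnn.
- exact: back_nbrs.
- exact: block_room.
Qed.

Lemma pos_first x : first_other x -> exists2 i, other i & pos x = P i.
Proof.
case: x => [[i j]|] //= /andP [Hi /eqP Hj]; exists i => //.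
by case/andP: (Hi) => /negbTE Ha /negbTE Hb; rewrite /pos /= Ha Hb Hj addn0.
Qed.

Lemma weight1_cases x y : chunk y == chunk x -> 1 <= weight y ->
  (exists2 i, other i & pos y = P i \/ pos y = (P i).+1) \/ pos y <= (start x).+1.
Proof.
move=> Hy Hwy; case HST: (first_other y || second_other y).
  have [i [j [_ Hi Hj ->]]] := pos_first_second HST.
  by left; exists i => //; case: j Hj => [[|[|j]] ?] //= _; [left; lia | right; lia].
right; move: HST => /negbT; rewrite negb_or => /andP [HS HT].
by rewrite -(start_eq Hy); exact: weight1_pos.
Qed.

Lemma weight2_cases x y : chunk y == chunk x -> 2 <= weight y ->
  first_other y \/ pos y = start x.
Proof.
move=> Hy Hwy; case HS: (first_other y); [by left | right].
by rewrite -(start_eq Hy); apply: weight2_pos; rewrite ?HS.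
Qed.

Section ThreeLegs.
Hypothesis m_eq3 : m = 3.
Hypothesis P_next : forall i, other i -> P i = (l a + l b).+1.

Lemma room2_three : room 2.
Proof.
move=> x _; apply: (@leq_trans (2 + 2)); first rewrite leq_add2r; last by rewrite m_eq3.
apply: (card_pos (s := [:: start x; (l a + l b).+1])) => y /andP [Hy Hwy].
case: (weight2_cases Hy Hwy) => [/pos_first [i /P_next <- ->] | ->];
  by rewrite !inE eqxx ?orbT.
Qed.

(* A chunk is [C, C+3] with 4 | C; the weighted vertices in it sit at C, C+1
   and at the first two vertices of leg c, so there are at most three of
   them unless leg c starts at C+2. *)
Lemma room1_three : (l a + l b).+1 %% 4 != 2 -> room 1.
Proof.
move=> Hmod x _; apply: (@leq_trans (3 + 1)); first rewrite leq_add2r; last by rewrite m_eq3.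
set C := start x; set Pc := (l a + l b).+1.
have HC4 : C %% 4 = 0 by rewrite /C /start (_ : 4 = k) ?modnMl ?m_eq3.
have Hmem y : (chunk y == chunk x) && (1 <= weight y) ->
    C <= pos y < C + 4 /\ [\/ pos y <= C.+1, pos y = Pc | pos y = Pc.+1].
  move=> /andP [Hy Hwy]; split; first by have := chunk_bounds Hy; move: m_eq3; lia.
  case: (weight1_cases Hy Hwy) => [[i /P_next ->] [->|->] | ?];
    by [apply: Or32 | apply: Or33 | apply: Or31].
case: (leqP Pc C.+1) => HPc.
  by apply: (card_pos (s := [:: C; C.+1; C.+2])) => y /Hmem [? []];
    rewrite !inE; lia.
case: (eqVneq Pc C.+3) => HPc3.
  by apply: (card_pos (s := [:: C; C.+1; C.+3])) => y /Hmem [? []];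
    rewrite !inE; lia.
apply: leq_trans (card_pos (s := [:: C; C.+1]) _) _ => // y /Hmem [? []];
  rewrite !inE; lia.
Qed.

End ThreeLegs.

Section ManyLegs.
Hypothesis m_ge4 : 4 <= m.
Hypothesis a_val : a = 0 :> nat.
Hypothesis b_val : b = 1 :> nat.
Hypothesis P_pre : forall i, other i -> P i = (pre l i).+1.
Hypothesis l_sorted : forall i j : 'I_m, i <= j -> l i <= l j.

Lemma pos_pre i (j : 'I_(l i)) :
  0 < i -> pos (Some (existT _ i j)) = (pre l i).+1 + j.
Proof.
move=> Hi; rewrite /pos /= ifN; last by apply: contraTneq Hi => ->; rewrite a_val.
have pre1 : pre l 1 = l a by rewrite -a_val pre_S a_val pre0.
case: eqP => [Hib | Hib]; first by rewrite (_ : pre l i = l a) ?Hib ?b_val //; lia.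
by rewrite P_pre // /other (introN eqP Hib) andbT; apply: contraTneq Hi => ->; rewrite a_val.
Qed.

Lemma last_vertex (i : 'I_m) : 0 < i -> 3 <= l i ->
  exists y, [/\ pos y = pre l i.+1, ~~ first_other y & ~~ second_other y].
Proof.
move=> Hi Hli; have Hj : (l i).-1 < l i by rewrite ltn_predL.
exists (Some (existT _ i (Ordinal Hj))); rewrite pos_pre // pre_S /=.
by split; [lia | rewrite /= negb_and; apply/orP; right; apply/eqP => /=; lia ..].
Qed.

(* A weight-1 competitor in the last slot of a full chunk would be one of the
   first two vertices of a leg i >= 2; then leg i - 1 yields a contradiction:
   if it has length >= 3, its last vertex lies in the chunk with weight 0;
   otherwise all legs before i are short and the chunk comes too early. *)
Lemma room1_many : room 1.
Proof.
move=> x Hwx; rewrite addn1 ltnS leqNgt; apply/negP => many.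
have C0 : 0 < start x by apply: weight_start; rewrite Hwx.
have Ck := start_ge C0.
have [z Hwz [Hz Hlast]] := full_chunk_last many.
have /andP [_ Hz2] := chunk_bounds Hz.
have [[i Hi Hp] | Hp] := weight1_cases Hz Hwz; last lia.
have Hpre : start x + m <= (pre l i).+2 <= start x + k.
  by move: Hp; rewrite P_pre //; lia.
have Hi2 : 1 < i.
  by case/andP: Hi; rewrite -!(inj_eq val_inj) /= a_val b_val; lia.
have Hi1 : i.-1 < m by have := ltn_ord i; lia.
set i1 := Ordinal Hi1.
have Hpre1 : pre l i = pre l i1.+1 by rewrite /= prednK //; lia.
case: (leqP 3 (l i1)) => Hli1.
  have [y [Hy HS HT]] := last_vertex (i := i1) ltac:(rewrite /=; lia) Hli1.
  have Hyc : chunk y == chunk x.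
    by apply/eqP; apply: chunk_of_bounds; rewrite Hy -Hpre1; lia.
  have := weight1_pos (full_chunk_all many Hyc) HS HT.
  by rewrite (start_eq Hyc) Hy -Hpre1; lia.
have Hshort (j : 'I_m) : j < i -> l j <= 2.
  by move=> Hj; apply: leq_trans (l_sorted (j := i1) _) Hli1; rewrite /=; lia.
by have := pre_le_bound Hshort; lia.
Qed.

Lemma three_hubs_before C : (l a).+1 < C -> 3 <= #|[set y | hub y && (pos y < C)]|.
Proof.
move=> HC; have la := l_gt0 a.
set va : V := Some (existT _ a (Ordinal (l_gt0 a))).
set vb : V := Some (existT _ b (Ordinal (l_gt0 b))).
have Hpos : map pos [:: None; va; vb] = [:: l a; (l a).-1; (l a).+1].
  by rewrite /= /pos /= eqxx eq_sym (negbTE a_neq_b) eqxx; congr [:: _; _; _]; lia.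
rewrite cardE (@leq_trans (size [:: None; va; vb])) // uniq_leq_size //.
  by rewrite -(map_inj_uniq pos_inj) Hpos /= !inE; lia.
move=> y; rewrite mem_enum !inE => /or3P [] /eqP ->;
  rewrite /= /pos /= ?eqxx ?[b == a]eq_sym ?(negbTE a_neq_b) /=; lia.
Qed.

(* Weight-2 competitors are hubs or sit at the start of the chunk; if the
   chunk starts after u and the first vertices of legs a and b, at most m - 2
   hubs remain; otherwise the competitors sit at its two ends. *)
Lemma room2_many : room 2.
Proof.
move=> x Hwx; set C := start x.
have C0 : 0 < C by apply: weight_start; rewrite Hwx.
have Ck := start_ge C0.
set S2 := [set y | _ && _].
case: (ltnP (l a).+1 C) => HlaC.
  have sub : S2 \subset [set y | pos y == C] :|: [set y | hub y && (C <= pos y)].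
    apply/subsetP => y; rewrite !inE => /andP [Hy Hwy].
    case: (weight2_cases Hy Hwy) => [HS | ->]; last by rewrite eqxx.
    have /andP [-> _] := chunk_bounds Hy.
    by move: HS; case: y {Hy Hwy} => [[i j]|] //= /andP [_ ->]; rewrite orbT.
  have h1 : #|[set y | pos y == C]| <= 1.
    by apply: (card_pos (s := [:: C])) => y /eqP ->; rewrite inE.
  have := subset_leq_card sub; have := cardsU [set y | pos y == C] [set y | hub y && (C <= pos y)].
  by have := three_hubs_before HlaC; have := hubs_split C; lia.
have Hlab : l a <= l b by apply: l_sorted; rewrite a_val.
apply: leq_trans (leq_add (card_pos (s := [:: C; C + m]) _) (leqnn 2)) _; last by rewrite /=; lia.
move=> y /andP [Hy Hwy]; case: (weight2_cases Hy Hwy) => [/pos_first [i Hi Hp] | ->].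
  by have := P_gt Hi; have := chunk_bounds Hy; rewrite !inE Hp; lia.
by rewrite !inE eqxx.
Qed.
End ManyLegs.

End Layout.

(* Three legs: choose two legs a, b with l a + l b + 1 not congruent to 2
   mod 4; such a pair exists since the three sums l a + l b cannot all be
   congruent to 1 mod 4, their total being even. *)
Lemma three_legs_pair (l : 'I_3 -> nat) : exists a b c : 'I_3,
  [/\ a != b, forall i, other a b i -> i = c & (l a + l b).+1 %% 4 != 2].
Proof.
have o0 : 0 < 3 by []; have o1 : 1 < 3 by []; have o2 : 2 < 3 by [].
case: (eqVneq ((l (Ordinal o0) + l (Ordinal o1)).+1 %% 4) 2) => H01.
  case: (eqVneq ((l (Ordinal o0) + l (Ordinal o2)).+1 %% 4) 2) => H02.
    case: (eqVneq ((l (Ordinal o1) + l (Ordinal o2)).+1 %% 4) 2) => H12.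
      by exfalso; move: H01 H02 H12; lia.
    exists (Ordinal o1), (Ordinal o2), (Ordinal o0); split => //.
    by case=> [[|[|[|?]]] Hi] //= _; apply: val_inj.
  exists (Ordinal o0), (Ordinal o2), (Ordinal o1); split => //.
  by case=> [[|[|[|?]]] Hi] //= _; apply: val_inj.
exists (Ordinal o0), (Ordinal o1), (Ordinal o2); split => //.
by case=> [[|[|[|?]]] Hi] //= _; apply: val_inj.
Qed.

Lemma three_legs_equitable (l : 'I_3 -> nat) :
  (forall i, 0 < l i) -> equitably_choosable (graph_sq (@Bedge 3 l)) 4.
Proof.
move=> l_gt0; have [a [b [c [Hab Hc Hmod]]]] := three_legs_pair l.
pose P (i : 'I_3) := (l a + l b).+1.
have P_le i : other a b i -> P i + l i <= #|Bvert l|.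
  move=> Hi; rewrite card_spider /P (bigD1 a) //= (bigD1 b) 1?eq_sym //= (bigD1 i) //=.
  by lia.
have P_gt i : other a b i -> l a + l b < P i by [].
have P_sep i i' : other a b i -> other a b i' -> i < i' -> P i + l i <= P i'.
  by move=> /Hc -> /Hc ->; rewrite ltnn.
have P_next i : other a b i -> P i = (l a + l b).+1 by [].
apply: (layout_equitable Hab l_gt0 P_gt P_sep P_le).
- exact: (room1_three Hab l_gt0 P_gt P_sep erefl P_next Hmod).
- exact: (room2_three Hab l_gt0 P_gt P_sep erefl P_next).
Qed.

Lemma many_legs_equitable (m : nat) (l : 'I_m -> nat) : 4 <= m ->
  (forall i, 0 < l i) -> (forall i j : 'I_m, i <= j -> l i <= l j) ->
  equitably_choosable (graph_sq (@Bedge m l)) m.+1.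
Proof.
move=> m_ge4 l_gt0 l_sorted.
have o0 : 0 < m by lia.
have o1 : 1 < m by lia.
set a := Ordinal o0; set b := Ordinal o1.
have Hab : a != b by [].
pose P (i : 'I_m) := (pre l i).+1.
have pre2 : pre l 2 = l a + l b by rewrite (pre_S l b) (pre_S l a) pre0.
have P_gt i : other a b i -> l a + l b < P i.
  case/andP; rewrite -!(inj_eq val_inj) /= => Ha Hb.
  by rewrite -pre2 ltnS pre_mono //; lia.
have P_sep i i' : other a b i -> other a b i' -> i < i' -> P i + l i <= P i'.
  by move=> _ _ Hii'; rewrite /P addSn -pre_S ltnS pre_mono.
have P_le i : other a b i -> P i + l i <= #|Bvert l|.
  by move=> _; rewrite card_spider -pre_all /P addSn -pre_S ltnS pre_mono.
apply: (layout_equitable Hab l_gt0 P_gt P_sep P_le).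
- exact: (room1_many Hab l_gt0 P_gt P_sep m_ge4 erefl erefl (fun _ _ => erefl) l_sorted).
- exact: (room2_many Hab l_gt0 P_gt P_sep m_ge4 erefl erefl l_sorted).
Qed.

Theorem lemma2p8 (m : nat) (l : 'I_m -> nat) :
  3 <= m ->
  (forall i, 0 < l i) ->
  (forall i j : 'I_m, i <= j -> l i <= l j) ->
  equitably_choosable (graph_sq (@Bedge m l)) m.+1.
Proof.
move=> m_ge3 l_gt0 l_sorted.
case: (ltnP 3 m) => [m_ge4 | m_le3]; first exact: many_legs_equitable.
have m_eq3 : m = 3 by lia.
by subst m; apply: three_legs_equitable.
Qed.
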